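(* Let $f$ be a continuous real-valued function defined on an interval $I$. Then $f$ is convex if and only if \[ \frac{1}{|J|}\int_J f(x)\,\mathrm{d}x\geq\frac{1}{|K|}\int_K f(x)\,\mathrm{d}x \] whenever $K\subset J$ are two compact subintervals of $I$ of positive length having the same midpoint. Here $|J|$, $|K|$ denote the lengths of the intervals. *)

From Stdlib Require Import Reals.
From Coquelicot Require Import Coquelicot.
Open Scope R_scope.

Definition is_interval (I : R -> Prop) : Prop :=
  forall x y z, I x -> I z -> x <= y <= z -> I y.

Definition continuous_on_set (I : R -> Prop) (f : R -> R) : Prop :=
  forall x, I x -> filterlim f (within I (locally x)) (locally (f x)).

Definition convex_on (I : R -> Prop) (f : R -> R) : Prop :=
  forall x y t, I x -> I y -> 0 <= t <= 1 ->
    f (t * x + (1 - t) * y) <= t * f x + (1 - t) * f y.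

Definition mean (f : R -> R) (a b : R) : R := RInt f a b / (b - a).

From Stdlib Require Import Reals Lra.
From Coquelicot Require Import Coquelicot.
Open Scope R_scope.

(* The substitution u = c + t y turns the mean of f over [c - t, c + t] into a
   quarter of the integral over [-1, 1] of f (c + t y) + f (c - t y).  For convex
   f this integrand grows with t, because c + s y and c - s y are symmetric convex
   combinations of c + t y and c - t y when |s| <= |t|; so the means grow with the
   radius.
   Conversely, centred means of an affine function equal its value at the centre,
   so the hypothesis survives subtracting a chord.  If f rose above the chord over
   [a, b], then G = f - chord would attain a positive maximum M at an interior
   point x0.  The largest interval centred at x0 inside [a, b] has an endpoint
   where G <= 0, so its mean is < M, whereas the means of G over small intervals
   around x0 tend to M: monotonicity of the means fails. *)

(* Composing with [clamp a b] extends a function continuous on [a, b] to one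
   continuous on all of R, the setting of Coquelicot's integration lemmas. *)
Definition clamp (a b u : R) : R := Rmax a (Rmin b u).

Lemma clamp_in a b u : a <= b -> a <= clamp a b u <= b.
Proof. intros; unfold clamp, Rmax, Rmin; repeat destruct Rle_dec; lra. Qed.

Lemma clamp_id a b u : a <= u <= b -> clamp a b u = u.
Proof. intros; unfold clamp, Rmax, Rmin; repeat destruct Rle_dec; lra. Qed.

Lemma clamp_lipschitz a b u v : Rabs (clamp a b u - clamp a b v) <= Rabs (u - v).
Proof.
  unfold clamp, Rmax, Rmin, Rabs; repeat destruct Rle_dec; repeat destruct Rcase_abs; lra.
Qed.

Lemma continuous_comp_clamp (I : R -> Prop) f a b x :
  is_interval I -> continuous_on_set I f -> a <= b -> I a -> I b ->
  continuous (fun u => f (clamp a b u)) x.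
Proof.
  intros HI Hf Hab Ia Ib.
  assert (I_clamp : forall u, I (clamp a b u))
    by (intro u; exact (HI a _ b Ia Ib (clamp_in a b u Hab))).
  apply (filterlim_comp _ _ _ (clamp a b) f _ (within I (locally (clamp a b x))));
    [| apply Hf, I_clamp].
  intros P [eps HP]. exists eps. intros u Hu. apply HP; [| apply I_clamp].
  exact (Rle_lt_trans _ _ _ (clamp_lipschitz a b u x) Hu).
Qed.

Lemma continuous_comp_affine (G : R -> R) c t y :
  (forall x, continuous G x) -> continuous (fun y => G (c + t * y)) y.
Proof.
  intros HG. apply (continuous_comp (fun y => c + t * y) G); [| apply HG].
  apply (@ex_derive_continuous R_AbsRing R_NormedModule). auto_derive. easy.
Qed.

Lemma continuous_affine A B x : continuous (fun u => A + B * u) x.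
Proof. apply (@ex_derive_continuous R_AbsRing R_NormedModule). auto_derive. easy. Qed.

Lemma continuous_sym_sum (G : R -> R) c t y :
  (forall x, continuous G x) -> continuous (fun y => G (c + t * y) + G (c - t * y)) y.
Proof.
  intros HG. apply (continuous_plus (fun y => G (c + t * y)) (fun y => G (c - t * y))).
  - apply continuous_comp_affine, HG.
  - apply (continuous_ext (fun y => G (c + - t * y)));
      [intros; rewrite Ropp_mult_distr_l_reverse; reflexivity|].
    apply continuous_comp_affine, HG.
Qed.

Lemma ex_RInt_continuous_everywhere (G : R -> R) a b :
  (forall x, continuous G x) -> ex_RInt G a b.
Proof. intros HG. apply (ex_RInt_continuous (V := R_CompleteNormedModule)). auto. Qed.

Lemma RInt_le_const (h : R -> R) p q K : p <= q -> ex_RInt h p q ->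
  (forall u, p <= u <= q -> h u <= K) -> RInt h p q <= K * (q - p).
Proof.
  intros Hpq Hh Hle.
  assert (H : RInt h p q <= RInt (fun _ => K) p q).
  { apply RInt_le; auto. apply ex_RInt_const. intros; apply Hle; lra. }
  rewrite RInt_const in H. unfold scal in H; simpl in H; unfold mult in H; simpl in H. lra.
Qed.

Lemma RInt_ge_const (h : R -> R) p q K : p <= q -> ex_RInt h p q ->
  (forall u, p <= u <= q -> K <= h u) -> K * (q - p) <= RInt h p q.
Proof.
  intros Hpq Hh Hge.
  assert (H : RInt (fun _ => K) p q <= RInt h p q).
  { apply RInt_le; auto. apply ex_RInt_const. intros; apply Hge; lra. }
  rewrite RInt_const in H. unfold scal in H; simpl in H; unfold mult in H; simpl in H. lra.
Qed.

Lemma continuous_lt_near (h : R -> R) x K : continuous h x -> h x < K ->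
  exists d, 0 < d /\ forall u, Rabs (u - x) < d -> h u < K.
Proof.
  intros Hh HK.
  destruct (Hh (fun y => y < K)) as [d Hd].
  { assert (Hpos : 0 < K - h x) by lra.
    exists (mkposreal _ Hpos). intros y Hy.
    change (Rabs (y - h x) < K - h x) in Hy. apply Rabs_def2 in Hy. lra. }
  exists d. split; [apply cond_pos | exact Hd].
Qed.

(* Near [p] the integrand stays below [(h p + K) / 2]. *)
Lemma RInt_lt_const (h : R -> R) p q K : p < q -> (forall x, continuous h x) ->
  (forall u, p <= u <= q -> h u <= K) -> h p < K -> RInt h p q < K * (q - p).
Proof.
  intros Hpq Hh Hle Hp.
  destruct (continuous_lt_near h p ((h p + K) / 2) (Hh p)) as [d [Hd Hnear]]; [lra|].
  set (m := p + Rmin (d / 2) (q - p)).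
  assert (Hm : p < m <= q /\ m - p < d).
  { unfold m. generalize (Rmin_l (d / 2) (q - p)) (Rmin_r (d / 2) (q - p)).
    apply Rmin_case; lra. }
  rewrite <- (RInt_Chasles h p m q) by apply ex_RInt_continuous_everywhere, Hh.
  assert (Hpm : RInt h p m <= (h p + K) / 2 * (m - p)).
  { apply RInt_le_const; [lra | apply ex_RInt_continuous_everywhere, Hh |].
    intros u Hu. apply Rlt_le, Hnear. rewrite Rabs_right; lra. }
  assert (Hmq : RInt h m q <= K * (q - m)).
  { apply RInt_le_const; [lra | apply ex_RInt_continuous_everywhere, Hh |].
    intros u Hu. apply Hle. lra. }
  change (RInt h p m + RInt h m q < K * (q - p)).
  assert ((h p + K) / 2 * (m - p) < K * (m - p)) by (apply Rmult_lt_compat_r; lra).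
  lra.
Qed.

Lemma mean_ext (f g : R -> R) p q : p <= q ->
  (forall u, p <= u <= q -> f u = g u) -> mean f p q = mean g p q.
Proof.
  intros Hpq Hfg. unfold mean. f_equal. apply RInt_ext. intros u Hu.
  rewrite Rmin_left, Rmax_right in Hu by lra. apply Hfg. lra.
Qed.

Lemma mean_plus (g h : R -> R) p q : ex_RInt g p q -> ex_RInt h p q ->
  mean (fun u => g u + h u) p q = mean g p q + mean h p q.
Proof.
  intros Hg Hh. unfold mean.
  assert (H := RInt_plus (V := R_CompleteNormedModule) g h p q Hg Hh).
  change (RInt (fun u => g u + h u) p q = RInt g p q + RInt h p q) in H.
  rewrite H. unfold Rdiv. ring.
Qed.

Lemma RInt_comp_centered (G : R -> R) c t : (forall x, continuous G x) -> t <> 0 ->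
  RInt (fun y => G (c + t * y)) (-1) 1 = RInt G (c - t) (c + t) / t.
Proof.
  intros HG Ht.
  assert (H := RInt_comp_lin G t c (-1) 1 (ex_RInt_continuous_everywhere G _ _ HG)).
  replace (t * -1 + c) with (c - t) in H by ring.
  replace (t * 1 + c) with (c + t) in H by ring.
  rewrite RInt_scal in H.
  2: { apply ex_RInt_continuous_everywhere. intros y.
       apply (continuous_ext (fun y => G (c + t * y))); [intros; f_equal; ring|].
       apply continuous_comp_affine, HG. }
  change (t * RInt (fun y => G (t * y + c)) (-1) 1 = RInt G (c - t) (c + t)) in H.
  rewrite <- H, (RInt_ext (fun y => G (t * y + c)) (fun y => G (c + t * y)))
    by (intros; f_equal; ring).
  unfold Rdiv. rewrite (Rmult_comm t), Rmult_assoc, Rinv_r, Rmult_1_r by easy. reflexivity.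
Qed.

Lemma mean_symmetrized (G : R -> R) c t : (forall x, continuous G x) -> t <> 0 ->
  mean G (c - t) (c + t) = RInt (fun y => G (c + t * y) + G (c - t * y)) (-1) 1 / 4.
Proof.
  intros HG Ht.
  rewrite (RInt_ext _ (fun y => G (c + t * y) + G (c + - t * y)))
    by (intros; do 2 f_equal; ring).
  assert (Hex : forall s, ex_RInt (fun y => G (c + s * y)) (-1) 1)
    by (intros; apply ex_RInt_continuous_everywhere; intros; apply continuous_comp_affine, HG).
  assert (H := RInt_plus (V := R_CompleteNormedModule) _ _ _ _ (Hex t) (Hex (- t))).
  change (RInt (fun y => G (c + t * y) + G (c + - t * y)) (-1) 1
          = RInt (fun y => G (c + t * y)) (-1) 1
            + RInt (fun y => G (c + - t * y)) (-1) 1) in H.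
  rewrite H.
  rewrite !RInt_comp_centered by (auto || lra).
  replace (c - - t) with (c + t) by ring. replace (c + - t) with (c - t) by ring.
  rewrite <- (opp_RInt_swap G (c - t) (c + t)) by apply ex_RInt_continuous_everywhere, HG.
  change (opp ?x) with (- x). unfold mean.
  (* [field] does not see the codomain of [RInt] as [R]. *)
  generalize (RInt G (c - t) (c + t)). intros J. field. split; [easy | contradict Ht; lra].
Qed.

Lemma mean_affine A B c t : t <> 0 ->
  mean (fun u => A + B * u) (c - t) (c + t) = A + B * c.
Proof.
  intros Ht.
  rewrite mean_symmetrized by (auto; apply continuous_affine).
  rewrite (RInt_ext _ (fun _ => 2 * (A + B * c))) by (intros; apply Rminus_diag_uniq; ring).
  rewrite RInt_const. unfold scal; simpl; unfold mult; simpl. field.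
Qed.

Lemma convex_sym_sum_le (I : R -> Prop) f c u v : convex_on I f ->
  I (c - v) -> I (c + v) -> Rabs u <= Rabs v ->
  f (c + u) + f (c - u) <= f (c + v) + f (c - v).
Proof.
  intros Hconv.
  assert (Hpos : forall w, 0 < w -> I (c - w) -> I (c + w) -> Rabs u <= w ->
            f (c + u) + f (c - u) <= f (c + w) + f (c - w)).
  { intros w Hw Im Ip Huw. apply Rabs_le_between in Huw.
    set (l := (w + u) / (2 * w)).
    assert (Hl : 0 <= l <= 1).
    { assert (E : l * (2 * w) = w + u) by (unfold l; field; lra). split; nra. }
    assert (H1 := Hconv _ _ l Ip Im Hl).
    assert (H2 := Hconv _ _ l Im Ip Hl).
    replace (l * (c + w) + (1 - l) * (c - w)) with (c + u) in H1 by (unfold l; field; lra).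
    replace (l * (c - w) + (1 - l) * (c + w)) with (c - u) in H2 by (unfold l; field; lra).
    lra. }
  intros Im Ip Huv.
  destruct (Rtotal_order 0 v) as [Hv | [Hv | Hv]].
  - rewrite (Rabs_right v) in Huv by lra. exact (Hpos v Hv Im Ip Huv).
  - subst v. rewrite Rabs_R0 in Huv. apply Rabs_le_between in Huv.
    replace u with 0 by lra. lra.
  - rewrite (Rabs_left v) in Huv by lra.
    replace (c + v) with (c - - v) in * by ring. replace (c - v) with (c + - v) in * by ring.
    assert (H := Hpos (- v) ltac:(lra) Ip Im Huv). lra.
Qed.

Lemma convex_mean_mono (I : R -> Prop) f c r s :
  is_interval I -> continuous_on_set I f -> convex_on I f ->
  0 < s <= r -> I (c - r) -> I (c + r) ->
  mean f (c - s) (c + s) <= mean f (c - r) (c + r).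
Proof.
  intros HI Hf Hconv Hsr Im Ip.
  set (G := fun u => f (clamp (c - r) (c + r) u)).
  assert (HG : forall x, continuous G x)
    by (intros; apply (continuous_comp_clamp I); auto; lra).
  assert (HfG : forall t, 0 < t <= r -> mean f (c - t) (c + t) = mean G (c - t) (c + t)).
  { intros t Ht. apply mean_ext; [lra|]. intros u Hu. unfold G. rewrite clamp_id; lra. }
  assert (Hin : forall t y, 0 < t <= r -> -1 <= y <= 1 ->
            c - r <= c + t * y <= c + r /\ c - r <= c - t * y <= c + r)
    by (intros; split; split; nra).
  rewrite !HfG, !mean_symmetrized by (auto || lra).
  apply Rmult_le_compat_r; [lra|].
  apply RInt_le; [lra | | |].
  1,2: apply ex_RInt_continuous_everywhere; intros; apply continuous_sym_sum, HG.
  intros y Hy. unfold G.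
  destruct (Hin s y) as [Hs1 Hs2]; [lra | lra |].
  destruct (Hin r y) as [Hr1 Hr2]; [lra | lra |].
  rewrite !clamp_id by assumption.
  apply (convex_sym_sum_le I); [exact Hconv | apply (HI (c - r) _ (c + r)); auto; lra ..|].
  rewrite !Rabs_mult. apply Rmult_le_compat_r; [apply Rabs_pos|]. rewrite !Rabs_right; lra.
Qed.

Lemma mean_ge_near_center (G : R -> R) c eps : (forall x, continuous G x) -> 0 < eps ->
  exists d, 0 < d /\ forall s, 0 < s < d -> G c - eps <= mean G (c - s) (c + s).
Proof.
  intros HG Heps.
  destruct (continuous_lt_near (fun u => - G u) c (- (G c - eps))) as [d [Hd Hnear]];
    [apply (continuous_opp G), HG | lra |].
  exists d. split; [exact Hd|]. intros s Hs. unfold mean.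
  replace (c + s - (c - s)) with (2 * s) by ring.
  apply (Rmult_le_reg_r (2 * s)); [lra|].
  unfold Rdiv. rewrite Rmult_assoc, Rinv_l, Rmult_1_r by lra.
  replace (2 * s) with (c + s - (c - s)) by ring.
  apply RInt_ge_const; [lra | apply ex_RInt_continuous_everywhere, HG |].
  intros u Hu. assert (Hclose : Rabs (u - c) < d) by (apply Rabs_lt_between'; lra).
  specialize (Hnear u Hclose). lra.
Qed.

Lemma mean_lt_of_boundary_lt (G : R -> R) c r M : (forall x, continuous G x) -> 0 < r ->
  (forall u, c - r <= u <= c + r -> G u <= M) -> G (c - r) + G (c + r) < 2 * M ->
  mean G (c - r) (c + r) < M.
Proof.
  intros HG Hr Hle Hbd. rewrite mean_symmetrized by (auto || lra).
  assert (H : RInt (fun y => G (c + r * y) + G (c - r * y)) (-1) 1 < 2 * M * (1 - -1)).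
  { apply RInt_lt_const; [lra | intros; apply continuous_sym_sum, HG | |].
    - intros y Hy. assert (G (c + r * y) <= M) by (apply Hle; split; nra).
      assert (G (c - r * y) <= M) by (apply Hle; split; nra). lra.
    - replace (c + r * -1) with (c - r) by ring.
      replace (c - r * -1) with (c + r) by ring. exact Hbd. }
  lra.
Qed.

Lemma concentric_mean_mono_max_principle (G : R -> R) a b : (forall x, continuous G x) ->
  (forall c r s, 0 < s <= r -> a <= c - r -> c + r <= b ->
     mean G (c - s) (c + s) <= mean G (c - r) (c + r)) ->
  G a <= 0 -> G b <= 0 -> forall z, a <= z <= b -> G z <= 0.
Proof.
  intros HG Hmono Ga Gb z Hz. apply Rnot_lt_le. intro Gz.
  destruct (continuity_ab_maj G a b) as [x0 [Hmax Hx0]];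
    [lra | intros; apply continuity_pt_filterlim, HG |].
  set (M := G x0).
  assert (HM : 0 < M) by (specialize (Hmax z Hz); unfold M; lra).
  assert (Hx0' : a < x0 < b).
  { unfold M in HM. split; apply Rnot_le_lt; intro;
      [replace x0 with a in HM by lra | replace x0 with b in HM by lra]; lra. }
  set (r := Rmin (x0 - a) (b - x0)).
  assert (Hra : a <= x0 - r) by (unfold r; generalize (Rmin_l (x0 - a) (b - x0)); lra).
  assert (Hrb : x0 + r <= b) by (unfold r; generalize (Rmin_r (x0 - a) (b - x0)); lra).
  assert (Hr : 0 < r) by (unfold r; apply Rmin_case; lra).
  assert (Hmean_r : mean G (x0 - r) (x0 + r) < M).
  { apply mean_lt_of_boundary_lt; [exact HG | exact Hr | intros; apply Hmax; lra |].
    assert (G (x0 - r) <= M) by (apply Hmax; lra).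
    assert (G (x0 + r) <= M) by (apply Hmax; lra).
    assert (Hend : x0 - r = a \/ x0 + r = b).
    { unfold r. destruct (Rle_or_lt (x0 - a) (b - x0));
        [left; rewrite Rmin_left | right; rewrite Rmin_right]; lra. }
    destruct Hend as [-> | ->]; lra. }
  destruct (mean_ge_near_center G x0 ((M - mean G (x0 - r) (x0 + r)) / 2)) as [d [Hd Hnear]];
    [exact HG | lra |].
  set (s := Rmin (d / 2) r).
  assert (Hs : 0 < s <= r /\ s < d).
  { unfold s. generalize (Rmin_l (d / 2) r) (Rmin_r (d / 2) r). apply Rmin_case; lra. }
  assert (H1 := Hnear s (conj (proj1 (proj1 Hs)) (proj2 Hs))).
  assert (H2 := Hmono x0 r s (proj1 Hs) Hra Hrb).
  unfold M in *. lra.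
Qed.

Lemma concentric_mean_mono_le_chord (I : R -> Prop) f a b z :
  is_interval I -> continuous_on_set I f ->
  (forall c r s, 0 < s -> s <= r -> I (c - r) -> I (c + r) ->
     mean f (c - r) (c + r) >= mean f (c - s) (c + s)) ->
  a < b -> I a -> I b -> a <= z <= b ->
  f z <= f a + (f b - f a) / (b - a) * (z - a).
Proof.
  intros HI Hf Hmono Hab Ia Ib Hz.
  set (B := (f b - f a) / (b - a)). set (A := f a - B * a).
  set (G := fun u => f (clamp a b u) - (A + B * u)).
  assert (HG : forall x, continuous G x).
  { intros x. apply (continuous_minus (fun u => f (clamp a b u)) (fun u => A + B * u));
      [| apply continuous_affine].
    apply (continuous_comp_clamp I); auto; lra. }
  assert (Hmean : forall c t, 0 < t -> a <= c - t -> c + t <= b ->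
            mean f (c - t) (c + t) = mean G (c - t) (c + t) + (A + B * c)).
  { intros c t Ht Hat Htb.
    rewrite (mean_ext f (fun u => G u + (A + B * u))); [| lra |].
    2: { intros u Hu. unfold G. rewrite clamp_id by lra. ring. }
    rewrite mean_plus, mean_affine
      by (lra || apply ex_RInt_continuous_everywhere; auto using continuous_affine).
    reflexivity. }
  assert (Ga : G a = 0) by (unfold G, A; rewrite clamp_id by lra; ring).
  assert (Gb : G b = 0) by (unfold G, A, B; rewrite clamp_id by lra; field; lra).
  assert (HGz : G z <= 0).
  { apply (concentric_mean_mono_max_principle G a b HG); [| lra | lra | exact Hz].
    intros c r s [Hs Hsr] Har Hrb.
    assert (H := Hmono c r s Hs Hsr
                   (HI a (c - r) b Ia Ib ltac:(lra)) (HI a (c + r) b Ia Ib ltac:(lra))).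
    rewrite !Hmean in H by lra. lra. }
  unfold G in HGz. rewrite clamp_id in HGz by lra. unfold A in HGz. lra.
Qed.

Lemma convex_on_of_chord (I : R -> Prop) f :
  (forall a b z, a < b -> I a -> I b -> a <= z <= b ->
     f z <= f a + (f b - f a) / (b - a) * (z - a)) ->
  convex_on I f.
Proof.
  intros Hchord x y t Ix Iy Ht.
  destruct (Rtotal_order x y) as [Hxy | [<- | Hxy]].
  - assert (H := Hchord x y (t * x + (1 - t) * y) Hxy Ix Iy ltac:(split; nra)).
    replace (f x + (f y - f x) / (y - x) * (t * x + (1 - t) * y - x))
      with (t * f x + (1 - t) * f y) in H by (field; lra). exact H.
  - replace (t * x + (1 - t) * x) with x by ring. lra.
  - assert (H := Hchord y x (t * x + (1 - t) * y) Hxy Iy Ix ltac:(split; nra)).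
    replace (f y + (f x - f y) / (x - y) * (t * x + (1 - t) * y - y))
      with (t * f x + (1 - t) * f y) in H by (field; lra). exact H.
Qed.

Theorem theorem3 (I : R -> Prop) (f : R -> R) :
  is_interval I -> continuous_on_set I f ->
  (convex_on I f <->
   (forall c r s, 0 < s -> s <= r -> I (c - r) -> I (c + r) ->
      mean f (c - r) (c + r) >= mean f (c - s) (c + s))).
Proof.
  intros HI Hf. split.
  - intros Hconv c r s Hs Hsr Im Ip. apply Rle_ge.
    exact (convex_mean_mono I f c r s HI Hf Hconv (conj Hs Hsr) Im Ip).
  - intros Hmono. apply convex_on_of_chord.
    intros a b z. exact (concentric_mean_mono_le_chord I f a b z HI Hf Hmono).
Qed.
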